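(* Let $m$ be an integer and $i\geq 2$. (i) If $m=N_i(1+(x-1)^5h(x))$ for some $h\in\mathbb Z[x]$, then for every $2\leq j\leq i$ there is $h_j\in\mathbb Z[x]$ with $m=N_j(1+(x-1)^5h_j(x))$ and $3\mid h_j(1)$ if and only if $3\mid h(1)$; and there are integers $A,B$ with $3m=N_1(1-x+9(A+B(1-x)))$, where $3\nmid A$ if $3\nmid h(1)$ and $3\mid A$ if $3\mid h(1)$. (ii) If $m=N_i(1+(x-1)^7t(x))$ for some $t\in\mathbb Z[x]$, then for every $2\leq j\leq i$ there is $t_j\in\mathbb Z[x]$ with $m=N_j(1+(x-1)^7t_j(x))$ and $3\mid t_j(1)$ if and only if $3\mid t(1)$.
   Context: For $k\geq1$, $\omega_k=e^{2\pi i/3^k}$ and $N_k(F)=\prod_{1\leq \ell\leq 3^k,\ 3\nmid \ell}F(\omega_k^\ell)$. *)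

From HB Require Import structures.
From mathcomp Require Import all_boot all_order all_algebra all_field.
Set Implicit Arguments. Unset Strict Implicit. Unset Printing Implicit Defensive.
Import Order.TTheory GRing.Theory Num.Theory.
Local Open Scope ring_scope.

(* omega k = e^{2 pi i / 3^k} in algC: (3^k).-root (-1) is the 3^k-th root of
   -1 of minimal nonnegative argument, i.e. e^{i pi / 3^k}; its square is
   e^{2 pi i / 3^k}. *)
Definition omega (k : nat) : algC := ((3 ^ k)%N.-root (-1)) ^+ 2.

Definition Nk (k : nat) (F : {poly int}) : algC :=
  \prod_(1 <= l < (3 ^ k).+1 | ~~ (3 %| l)%N) (map_poly intr F).[omega k ^+ l].

From HB Require Import structures.
From mathcomp Require Import all_boot all_order all_algebra all_field.
From mathcomp Require Import ring lra zify.
Set Implicit Arguments. Unset Strict Implicit. Unset Printing Implicit Defensive.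
Import Order.TTheory GRing.Theory Num.Theory.
Local Open Scope ring_scope.

(* For [k >= 1], [omega (k + 1)] is a cube root of [omega k]; writing
   [F(x) = F0(x^3) + x F1(x^3) + x^2 F2(x^3)] and grouping the conjugates
   [t, t c, t c^2] ([c] a primitive cube root of unity) gives
   [N_{k+1}(F) = N_k(F0^3 + x F1^3 + x^2 F2^3 - 3 x F0 F1 F2)].
   For [F = 1 + (x - 1)^e h] with [e = 5] or [7] and
   [h = h0(x^3) + x h1(x^3) + x^2 h2(x^3)], the new argument is
   [1 + (x - 1)^e h'] modulo [3] and [(x - 1)^(e + 1)], where
   [h'(1) = a^3 + b^3 + c^3 - 3abc = a + b + c = h(1)] modulo [3] for
   [(a, b, c) = (h0(1), h1(1), h2(1))].  For [k >= 2], [3] lies in the ideal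
   generated by [Phi_{3^k}] and [(x - 1)^6], so the congruence even holds modulo
   [Phi_{3^k}], which [N_k] does not see; iterating descends from level [i] to
   any level [j >= 2].  From level [2] to level [1], the relations
   [3 = - x^2 (x - 1)^2] modulo [Phi_3] and [N_1(1 - x) = 3] produce the form
   [1 - x + 9 (A + B (1 - x))] with [A = h(1)] modulo [3].
   Finally, [omega k] is a primitive [3^k]-th root of unity because [n.-root]
   picks the root of minimal argument. *)

(* Read [x + i y = e^{i phi}] with [0 <= phi <= pi] and [s = sqrt 3]: the
   middle hypotheses say [cos phi <= cos 3 phi] and [0 <= sin 3 phi], which
   leave only [phi = 0] or [phi >= 2 pi / 3]; in the latter case
   [e^{i (phi - 2 pi / 3)}] is a cube root of [e^{3 i phi}] in the upper half
   plane with a larger real part, which the last hypothesis forbids. *)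
Lemma cube_root_angle_contra (R : realFieldType) (x y s : R) :
  x ^+ 2 + y ^+ 2 = 1 -> 0 <= y -> 0 <= s -> s ^+ 2 = 3 -> x != 1 ->
  x <= x ^+ 3 - 3 * x * y ^+ 2 -> 0 <= 3 * x ^+ 2 * y - y ^+ 3 ->
  (0 <= - x * s - y -> - x + y * s <= 2 * x) -> False.
Proof.
move=> xy1 y_ge0 s_ge0 s2 x_neq1 cos3 sin3 rot.
have [x_le0 y2_le] : x <= 0 /\ y ^+ 2 <= 3 * x ^+ 2.
  have [y0|y_neq0] := eqVneq y 0; last first.
    have y_gt0 : 0 < y by rewrite lt_def y_neq0.
    split; nra.
  subst y; split; last nra.
  have : (x - 1) * (x + 1) = 0 by nra.
  move/eqP; rewrite mulf_eq0 subr_eq0 (negbTE x_neq1) addr_eq0 => /eqP ->; lra.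
have y_le : y <= - x * s.
  by rewrite -(@ler_pXn2r _ 2) ?nnegrE //; nra.
have := rot ltac:(lra); nra.
Qed.

Lemma expr3_Crect (x y : algC) :
  (x + 'i * y) ^+ 3 = (x ^+ 3 - 3 * x * y ^+ 2) + 'i * (3 * x ^+ 2 * y - y ^+ 3).
Proof. by ring: (@sqrCi algC). Qed.

(* [3.-root r * e^{- 2 i pi / 3}] is another cube root of [r]. *)
Lemma Re_rootC3_rot (r : algC) :
  0 <= - 'Re (3.-root r) * sqrtC 3 - 'Im (3.-root r) ->
  - 'Re (3.-root r) + 'Im (3.-root r) * sqrtC 3 <= 2 * 'Re (3.-root r).
Proof.
set z := 3.-root r; set s := sqrtC 3 => Imw.
have [Rx Ry] := (Creal_Re z, Creal_Im z).
set x := 'Re z in Rx Imw *; set y := 'Im z in Ry Imw *.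
have Rs : s \is Num.real by rewrite ger0_real ?sqrtC_ge0 ?ler0n.
have s2 : s ^+ 2 = 3 by rewrite sqrtCK.
have [Ru Rv] : (- x + y * s) / 2 \is Num.real /\ (- x * s - y) / 2 \is Num.real.
  by split; apply: realM; rewrite ?realV ?realn //;
    [apply: realD; rewrite ?realN ?realM | apply: realB; rewrite ?realM ?realN].
have Ew : z * ((-1 - 'i * s) / 2) = (- x + y * s) / 2 + 'i * ((- x * s - y) / 2).
  by rewrite [z]Crect -/x -/y; ring: (@sqrCi algC).
have w3 : (z * ((-1 - 'i * s) / 2)) ^+ 3 = r.
  have c3 : (-1 - 'i * s) ^+ 3 = 2 ^+ 3 by ring: (@sqrCi algC) s2.
  by rewrite exprMn expr_div_n c3 divff ?mulr1 ?expf_neq0 ?pnatr_eq0 // rootCK.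
have := rootC_Re_max (isT : (0 < 3)%N) w3.
rewrite Ew Re_rect // Im_rect // divr_ge0 ?ler0n // => /(_ isT).
by rewrite -/z -/x ler_pdivrMr ?ltr0n // [x * _]mulrC.
Qed.

Lemma rootCN1_expr_neqN1 (m : nat) : (0 < m)%N ->
  ((3 * m)%N.-root (-1 : algC)) ^+ m != -1.
Proof.
move=> m_gt0; set r := _.-root _; apply/eqP => rm.
have n_gt1 : (1 < 3 * m)%N by rewrite (@leq_trans 3) // leq_pmulr.
have n_gt0 := ltnW n_gt1.
(* By [rm], [z = 3.-root r] is itself a [3m]-th root of [-1] in the upper half
   plane, hence has no larger real part than [r]. *)
set z := 3.-root r.
have z3 : z ^+ 3 = r by rewrite rootCK.
have zn : z ^+ (3 * m) = -1 by rewrite exprM z3.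
have [Rx Ry] := (Creal_Re z, Creal_Im z).
set x := 'Re z in Rx *; set y := 'Im z in Ry *.
have Ez : z = x + 'i * y by rewrite /x /y -Crect.
pose s : algC := sqrtC 3.
have [s_ge0 s2] : 0 <= s /\ s ^+ 2 = 3 by rewrite sqrtC_ge0 ler0n sqrtCK.
have Rs : s \is Num.real by rewrite ger0_real.
have xy1 : x ^+ 2 + y ^+ 2 = 1.
  have z1 : `|z| = 1.
    by apply/eqP; rewrite -(@pexpr_eq1 _ _ (3 * m)) // -normrX zn normrN normr1.
  by rewrite -normC2_rect // -Ez z1 expr1n.
have y_ge0 : 0 <= y by apply: Im_rootC_ge0.
have Er : r = (x ^+ 3 - 3 * x * y ^+ 2) + 'i * (3 * x ^+ 2 * y - y ^+ 3).
  by rewrite -z3 Ez expr3_Crect.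
have [Rr1 Rr2] :
    x ^+ 3 - 3 * x * y ^+ 2 \is Num.real /\ 3 * x ^+ 2 * y - y ^+ 3 \is Num.real.
  by split; rewrite realB ?realM ?realX ?realn.
have cos3 : x <= x ^+ 3 - 3 * x * y ^+ 2.
  by rewrite -(Re_rect Rr1 Rr2) -Er; apply: rootC_Re_max zn y_ge0.
have sin3 : 0 <= 3 * x ^+ 2 * y - y ^+ 3.
  by rewrite -(Im_rect Rr1 Rr2) -Er; apply: Im_rootC_ge0.
have rot : 0 <= - x * s - y -> - x + y * s <= 2 * x := @Re_rootC3_rot r.
have x_neq1 : x != 1.
  apply/eqP => x1; have y0 : y = 0.
    apply/eqP; rewrite -sqrf_eq0; apply/eqP.
    by rewrite -(subrr 1) -{1}xy1 x1 expr1n [1 + _]addrC addrK.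
  move: zn; rewrite Ez x1 y0 mulr0 addr0 expr1n => /eqP.
  by rewrite -subr_eq0 opprK (eqr_nat _ 2 0).
(* Conclude in the real field [algR], where [nra] applies. *)
apply: (@cube_root_angle_contra algR (in_algR Rx) (in_algR Ry) (in_algR Rs));
  rewrite //=.
all: by apply: val_inj; rewrite /= -!expr2.
Qed.

Lemma omega_prim k : (0 < k)%N -> (3 ^ k)%N.-primitive_root (omega k).
Proof.
move=> k_gt0; set r := (3 ^ k)%N.-root (-1 : algC).
have En : (3 ^ k = 3 * 3 ^ k.-1)%N by rewrite -expnS prednK.
have rn : r ^+ (3 ^ k) = -1 by rewrite rootCK ?expn_gt0.
have wn : omega k ^+ (3 ^ k) = 1 by rewrite /omega -exprM mulnC exprM rn sqrrN expr1n.
have [d d_prim d_dvd] := prim_order_exists (expn_gt0 3 k) wn.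
have [a a_le Ed] : exists2 a, (a <= k)%N & d = (3 ^ a)%N by exact/dvdn_pfactor.
rewrite {}Ed in d_prim.
have [Ea | a_neq] := eqVneq a k; first by rewrite Ea in d_prim.
have : omega k ^+ (3 ^ k.-1) == 1.
  rewrite -(prim_order_dvd d_prim) dvdn_exp2l // -ltnS prednK //.
  by rewrite ltn_neqAle a_neq a_le.
rewrite /omega -exprM mulnC exprM -/r sqrf_eq1 => /orP[/eqP r1 | /eqP rN1].
  move: rn; rewrite En mulnC exprM r1 expr1n => /eqP.
  by rewrite -subr_eq0 opprK (eqr_nat _ 2 0).
by have := rootCN1_expr_neqN1 (expn_gt0 3 k.-1); rewrite -En -/r rN1 eqxx.
Qed.

Lemma prod_prim_root_coprime (R : fieldType) (S : comPzSemiRingType) n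
    (eta xi : R) (g : R -> S) :
  n.-primitive_root eta -> n.-primitive_root xi ->
  \prod_(l < n | coprime l n) g (eta ^+ l) = \prod_(l < n | coprime l n) g (xi ^+ l).
Proof.
move=> eta_prim xi_prim; have n_gt0 := prim_order_gt0 eta_prim.
have [a Eeta] := prim_rootP xi_prim (prim_expr_order eta_prim).
have a_co : coprime a n by rewrite -(prim_root_exp_coprime _ xi_prim) -Eeta.
pose f (i : 'I_n) : 'I_n := Ordinal (ltn_pmod (a * i)%N n_gt0).
have fE i : xi ^+ f i = eta ^+ i by rewrite /= (prim_expr_mod xi_prim) exprM -Eeta.
have f_inj : injective f.
  move=> i j /(congr1 (fun t : 'I_n => xi ^+ t)); rewrite !fE => /eqP.
  by rewrite (eq_prim_root_expr eta_prim) !modn_small // => /eqP /val_inj.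
rewrite [RHS](reindex_inj f_inj); apply: eq_big => [i|i _]; last by rewrite fE.
by rewrite /= coprime_modl coprimeMl a_co.
Qed.

Lemma dvd3_exp3 k : (0 < k)%N -> (3 %| 3 ^ k)%N.
Proof. by move=> k_gt0; rewrite -(prednK k_gt0) expnS dvdn_mulr. Qed.

Lemma coprime_exp3 l k : (0 < k)%N -> coprime l (3 ^ k) = ~~ (3 %| l)%N.
Proof. by move=> k_gt0; rewrite coprime_sym coprime_pexpl // prime_coprime. Qed.

Lemma NkE k F (eta : algC) : (0 < k)%N -> (3 ^ k)%N.-primitive_root eta ->
  Nk k F = \prod_(0 <= l < 3 ^ k | ~~ (3 %| l)%N) (map_poly intr F).[eta ^+ l].
Proof.
move=> k_gt0 eta_prim.
rewrite /Nk big_mkcond big_nat_recr ?expn_gt0 //= dvd3_exp3 // mulr1 -big_mkcond /=.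
transitivity (\prod_(0 <= l < 3 ^ k | ~~ (3 %| l)%N) (map_poly intr F).[omega k ^+ l]).
  by rewrite [RHS]big_ltn_cond ?expn_gt0.
rewrite !big_mkord -!(eq_bigl _ _ (fun l : 'I_(3 ^ k) => coprime_exp3 l k_gt0)).
exact: prod_prim_root_coprime (omega_prim k_gt0) eta_prim.
Qed.

Lemma NkM k F G : Nk k (F * G) = Nk k F * Nk k G.
Proof. by rewrite /Nk -big_split; apply: eq_bigr => l _; rewrite rmorphM hornerM. Qed.

Lemma prim_root3_sum (R : idomainType) (c : R) :
  3.-primitive_root c -> 1 + c + c ^+ 2 = 0.
Proof.
move=> c_prim; have c_neq1 : c != 1 by rewrite -[c]expr1 -(prim_order_dvd c_prim).
have : (c - 1) * (1 + c + c ^+ 2) = 0.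
  by rewrite -[RHS](subrr 1) -{3}(prim_expr_order c_prim); ring.
by move/eqP; rewrite mulf_eq0 subr_eq0 (negbTE c_neq1) => /eqP.
Qed.

Definition Phi3 k : {poly int} := 1 + 'X ^+ (3 ^ k.-1) + 'X ^+ (2 * 3 ^ k.-1).

Lemma root_Phi3 (R : idomainType) k (x : R) :
  (0 < k)%N -> (3 ^ k)%N.-primitive_root x -> (map_poly intr (Phi3 k)).[x] = 0.
Proof.
move=> k_gt0 x_prim; have := dvdn_prim_root x_prim (dvd3_exp3 k_gt0).
rewrite -(prednK k_gt0) expnS mulKn //= => /prim_root3_sum.
by rewrite /Phi3 !rmorphD /= rmorph1 !map_polyXn !hornerE -exprM mulnC.
Qed.

Lemma Nk_modPhi3 k F q : (0 < k)%N -> Nk k (F + Phi3 k * q) = Nk k F.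
Proof.
move=> k_gt0; rewrite /Nk; apply: eq_bigr => l l_co.
rewrite rmorphD rmorphM hornerD hornerM root_Phi3 ?mul0r ?addr0 //.
by rewrite prim_root_exp_coprime ?omega_prim // coprime_exp3.
Qed.

Lemma prod_split3 (R : comPzSemiRingType) n (g : nat -> R) : (3 %| n)%N ->
  \prod_(0 <= l < 3 * n | ~~ (3 %| l)%N) g l =
  \prod_(0 <= l < n | ~~ (3 %| l)%N) (g l * g (l + n)%N * g (l + 2 * n)%N).
Proof.
move=> n3; pose P l := ~~ (3 %| l)%N.
have shift a : (3 %| a)%N -> \prod_(a <= l < a + n | P l) g l =
                              \prod_(0 <= l < n | P l) g (l + a)%N.
  move=> a3; rewrite -{1}[a]add0n big_addn addKn; apply: eq_bigl => l.
  by rewrite /P dvdn_addl.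
rewrite !big_split /= mul2n -addnn (_ : 3 * n = n + n + n)%N; last by lia.
rewrite (@big_cat_nat _ _ _ (n + n)) ?leq_addr //= (@big_cat_nat _ _ _ n) ?leq_addr //=.
by rewrite shift ?shift ?dvdn_add.
Qed.

Definition cubic_norm (R : comPzRingType) (y a b c : R) : R :=
  a ^+ 3 + y * b ^+ 3 + y ^+ 2 * c ^+ 3 - 3 * y * a * b * c.

Lemma cubic_normE (R : comPzRingType) (c x a b d : R) : 1 + c + c ^+ 2 = 0 ->
  (a + x * b + x ^+ 2 * d) * (a + (x * c) * b + (x * c) ^+ 2 * d) *
  (a + (x * c ^+ 2) * b + (x * c ^+ 2) ^+ 2 * d) = cubic_norm (x ^+ 3) a b d.
Proof.
move=> c_sum; have c2 : c ^+ 2 = - 1 - c by rewrite -[LHS]subr0 -c_sum; ring.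
by rewrite /cubic_norm; ring: c2.
Qed.

Lemma horner_comp_X3 (p : {poly int}) (t : algC) :
  (map_poly intr (p \Po 'X ^+ 3)).[t] = (map_poly intr p).[t ^+ 3].
Proof. by rewrite map_comp_poly horner_comp map_polyXn hornerXn. Qed.

Lemma horner_cubic_norm (y a b c : {poly int}) (t : algC) :
  (map_poly intr (cubic_norm y a b c)).[t] =
  cubic_norm (map_poly intr y).[t] (map_poly intr a).[t] (map_poly intr b).[t]
             (map_poly intr c).[t].
Proof.
rewrite /cubic_norm !(rmorphXn, rmorphB, rmorphD, rmorphM).
rewrite !(hornerD, hornerN, hornerM, horner_exp).
by rewrite rmorph1 -polyC1 hornerC; ring.
Qed.

Lemma horner_decomp3 (F0 F1 F2 : {poly int}) (t : algC) :
  (map_poly intr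
     (F0 \Po 'X ^+ 3 + 'X * (F1 \Po 'X ^+ 3) + 'X ^+ 2 * (F2 \Po 'X ^+ 3))).[t] =
  (map_poly intr F0).[t ^+ 3] + t * (map_poly intr F1).[t ^+ 3] +
  t ^+ 2 * (map_poly intr F2).[t ^+ 3].
Proof.
by rewrite !rmorphD !rmorphM /= !hornerE !horner_comp_X3 map_polyX hornerX expr2.
Qed.

Lemma Nk_descent k (F0 F1 F2 : {poly int}) : (0 < k)%N ->
  Nk k.+1 (F0 \Po 'X ^+ 3 + 'X * (F1 \Po 'X ^+ 3) + 'X ^+ 2 * (F2 \Po 'X ^+ 3)) =
  Nk k (cubic_norm 'X F0 F1 F2).
Proof.
move=> k_gt0; set n := (3 ^ k)%N.
have z_prim := omega_prim (ltn0Sn k); set z := omega k.+1 in z_prim *.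
have z3_prim : n.-primitive_root (z ^+ 3).
  have := dvdn_prim_root z_prim (dvdn_exp2l 3 (leqnSn k)).
  by rewrite expnS mulnK ?expn_gt0.
have c_prim : 3.-primitive_root (z ^+ n).
  by have := dvdn_prim_root z_prim (dvd3_exp3 (ltn0Sn k)); rewrite expnS mulKn.
rewrite (NkE _ (ltn0Sn k) z_prim) (NkE _ k_gt0 z3_prim) expnS prod_split3 ?dvd3_exp3 //.
apply: eq_bigr => l _; rewrite mul2n -addnn !exprD -exprM mulnC exprM.
move: c_prim; set x := z ^+ l; set c := z ^+ n => c_prim.
have c3 : c ^+ 3 = 1 := prim_expr_order c_prim.
have [xc3 xcc3] : (x * c) ^+ 3 = x ^+ 3 /\ (x * (c * c)) ^+ 3 = x ^+ 3.
  by rewrite !exprMn c3 mul1r mulr1.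
rewrite !horner_decomp3 xc3 xcc3 -expr2 cubic_normE ?prim_root3_sum //.
by rewrite horner_cubic_norm map_polyX hornerX.
Qed.

Lemma decomp3 (R : comNzRingType) (p : {poly R}) : exists p0 p1 p2 : {poly R},
  p = p0 \Po 'X ^+ 3 + 'X * (p1 \Po 'X ^+ 3) + 'X ^+ 2 * (p2 \Po 'X ^+ 3).
Proof.
elim/poly_ind: p => [|q c [q0 [q1 [q2 ->]]]].
  by exists 0, 0, 0; rewrite !comp_poly0 !mulr0 !addr0.
exists (c%:P + 'X * q2), q0, q1.
by rewrite !rmorphD !rmorphM /= comp_polyC comp_polyX; ring.
Qed.

(* Multiplication by [x - 1] in the coordinates [(a, b, c)] of [a + x b + x^2 c]
   over [R[y]], where [y = x^3]. *)
Definition mul_Xsub1 (R : comPzRingType) (y : R) (v : R * R * R) : R * R * R :=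
  (- v.1.1 + y * v.2, v.1.1 - v.1.2, v.1.2 - v.2).

(* The norm from [R[x]] to [R[y]], [y = x^3], of [1 + (x - 1)^e (a + x b + x^2 c)]. *)
Definition norm_Xsub1 (R : comPzRingType) e (y a b c : R) : R :=
  let d := iter e (mul_Xsub1 y) (a, b, c) in cubic_norm y (1 + d.1.1) d.1.2 d.2.

Lemma iter_mul_Xsub1E (R : comPzRingType) (x : R) e a b c :
  let d := iter e (mul_Xsub1 (x ^+ 3)) (a, b, c) in
  (x - 1) ^+ e * (a + x * b + x ^+ 2 * c) = d.1.1 + x * d.1.2 + x ^+ 2 * d.2.
Proof.
elim: e => [|e IH] /=; first by rewrite expr0 mul1r.
by rewrite exprS -mulrA IH /mul_Xsub1 /=; ring.
Qed.

Lemma iter_mul_Xsub1_rmorph (R S : comPzRingType) (f : {rmorphism R -> S}) y e a b c :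
  let d := iter e (mul_Xsub1 y) (a, b, c) in
  iter e (mul_Xsub1 (f y)) (f a, f b, f c) = (f d.1.1, f d.1.2, f d.2).
Proof.
elim: e => [|e IH] //=; rewrite IH /mul_Xsub1 /=.
by rewrite rmorphD rmorphN rmorphM !rmorphB.
Qed.

Lemma Nk_norm_Xsub1 k e (h : {poly int}) : (0 < k)%N -> exists h0 h1 h2 : {poly int},
  Nk k.+1 (1 + ('X - 1) ^+ e * h) = Nk k (norm_Xsub1 e 'X h0 h1 h2) /\
  h.[1] = h0.[1] + h1.[1] + h2.[1].
Proof.
move=> k_gt0; have [h0 [h1 [h2 Eh]]] := decomp3 h.
exists h0, h1, h2; split; last by rewrite Eh !hornerE !horner_comp !hornerE.
have := iter_mul_Xsub1_rmorph (comp_poly ('X ^+ 3 : {poly int})) 'X e h0 h1 h2.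
rewrite /= comp_polyX => Ed.
have := iter_mul_Xsub1E ('X : {poly int}) e
  (h0 \Po 'X ^+ 3) (h1 \Po 'X ^+ 3) (h2 \Po 'X ^+ 3).
rewrite /= Ed /= -Eh => ->.
by rewrite /norm_Xsub1 -Nk_descent // rmorphD /= comp_polyC polyC1 !addrA.
Qed.

Section NormXsub1Congruences.

Variables (R : comPzRingType) (y phi u v a b c : R).
Hypothesis three_ideal : 3 = phi * u + (y - 1) ^+ 6 * v.

(* The explicit polynomials below are certificates of ideal membership in
   [Z[z, a, b, c]], [z = y - 1], found by computer algebra. *)
Lemma norm_Xsub1_5_congr : exists w q : R,
  norm_Xsub1 5 y a b c = 1 + (y - 1) ^+ 5 * (cubic_norm 1 a b c + (y - 1) * w) + phi * q.
Proof.
have [P1 [P2 E]] : exists P1 P2 : R, norm_Xsub1 5 y a b c =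
    1 + (y - 1) ^+ 5 * cubic_norm 1 a b c + (y - 1) ^+ 6 * P1 + 3 * P2.
  move: (y - 1) (subrK 1 y) => z <-.
  exists (2 * c ^+ 3 + b ^+ 3 - 3 * a * b * c + z * c ^+ 3);
  exists
    (81 * c ^+ 2 - 9 * b - 81 * b * c + 81 * b ^+ 2 + 9 * a - 81 * a * c - 81 * a * b
     + 81 * a ^+ 2 - 5 * z * c + 243 * z * c ^+ 2 - 8 * z * b - 216 * z * b * c
     + 189 * z * b ^+ 2 + 10 * z * a - 189 * z * a * c - 162 * z * a * b
     + 135 * z * a ^+ 2 - 5 * z ^+ 2 * c + 258 * z ^+ 2 * c ^+ 2 + z ^+ 2 * b
     - 195 * z ^+ 2 * b * c + 141 * z ^+ 2 * b ^+ 2 - 141 * z ^+ 2 * a * c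
     - 96 * z ^+ 2 * a * b + 60 * z ^+ 2 * a ^+ 2 + 111 * z ^+ 3 * c ^+ 2
     - 65 * z ^+ 3 * b * c + 34 * z ^+ 3 * b ^+ 2 - 34 * z ^+ 3 * a * c
     - 15 * z ^+ 3 * a * b + 5 * z ^+ 3 * a ^+ 2 + 15 * z ^+ 4 * c ^+ 2
     - 5 * z ^+ 4 * b * c + z ^+ 4 * b ^+ 2 - z ^+ 4 * a * c).
  by rewrite /norm_Xsub1 /cubic_norm /mul_Xsub1 /=; ring.
by exists (P1 + v * P2), (u * P2); rewrite E three_ideal; ring.
Qed.

Lemma norm_Xsub1_7_congr : exists w q : R,
  norm_Xsub1 7 y a b c = 1 + (y - 1) ^+ 7 * (cubic_norm 1 a b c + (y - 1) * w) + phi * q.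
Proof.
have [P1 [P2 [P3 E]]] : exists P1 P2 P3 : R, norm_Xsub1 7 y a b c =
    1 + (y - 1) ^+ 7 * cubic_norm 1 a b c + (y - 1) ^+ 8 * P1 +
    3 * ((y - 1) ^+ 2 * P2) + 3 * (3 * P3).
  move: (y - 1) (subrK 1 y) => z <-.
  exists (2 * c ^+ 3 + b ^+ 3 - 3 * a * b * c + z * c ^+ 3);
  exists
    (- 32 * c + 3753 * c ^+ 2 + 21 * b - 3024 * b * c + 2376 * b ^+ 2 - 7 * a
     - 2376 * a * c - 1809 * a * b + 1323 * a ^+ 2 + z * c + 2484 * z * c ^+ 2
     - 1701 * z * b * c + 1107 * z * b ^+ 2 - 1107 * z * a * c - 675 * z * a * b
     + 378 * z * a ^+ 2 + 757 * z ^+ 2 * c ^+ 2 - 406 * z ^+ 2 * b * c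
     + 196 * z ^+ 2 * b ^+ 2 - 196 * z ^+ 2 * a * c - 82 * z ^+ 2 * a * b
     + 28 * z ^+ 2 * a ^+ 2 + 83 * z ^+ 3 * c ^+ 2 - 28 * z ^+ 3 * b * c
     + 7 * z ^+ 3 * b ^+ 2 - 7 * z ^+ 3 * a * c - z ^+ 3 * a * b + z ^+ 4 * c ^+ 2);
  exists
    (- 9 * c + 243 * c ^+ 2 - 243 * b * c + 243 * b ^+ 2 + 9 * a - 243 * a * c
     - 243 * a * b + 243 * a ^+ 2 - 20 * z * c + 891 * z * c ^+ 2 + 7 * z * b
     - 810 * z * b * c + 729 * z * b ^+ 2 + 7 * z * a - 729 * z * a * c
     - 648 * z * a * b + 567 * z * a ^+ 2).
  by rewrite /norm_Xsub1 /cubic_norm /mul_Xsub1 /=; ring.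
exists (P1 + v * P2 + (y - 1) ^+ 4 * v ^+ 2 * P3).
exists (u * (y - 1) ^+ 2 * P2 + (phi * u ^+ 2 + 2 * u * (y - 1) ^+ 6 * v) * P3).
by rewrite E three_ideal; ring.
Qed.

End NormXsub1Congruences.

Lemma expr_exp3_sub1 (R : comPzRingType) (x : R) j : exists p q : R,
  x ^+ (3 ^ j.+1) - 1 = 3 * (x - 1) * p + (x - 1) ^+ 3 * q.
Proof.
elim: j => [|j [p [q E]]]; first by exists (1 + (x - 1)), 1; rewrite expn1; ring.
set w := 3 * p + (x - 1) ^+ 2 * q.
have Ex : x ^+ (3 ^ j.+1) = 1 + (x - 1) * w by rewrite -(subrK 1 (x ^+ _)) E /w; ring.
by exists (w + (x - 1) * w ^+ 2), (w ^+ 3); rewrite expnSr exprM Ex; ring.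
Qed.

(* [Phi3 k] is [3] times a unit modulo [(X - 1)^6]; the inverse of that unit
   is a truncated geometric series. *)
Lemma three_ideal_Phi3 k : (2 <= k)%N -> exists u v : {poly int},
  3 = Phi3 k * u + ('X - 1) ^+ 6 * v.
Proof.
move=> k_ge2; have [p [q E]] := expr_exp3_sub1 ('X : {poly int}) k.-2.
rewrite (_ : k.-2.+1 = k.-1) in E; last by lia.
set z : {poly int} := 'X - 1 in E *.
set w := 3 * p + z ^+ 2 * q + z * (3 * p ^+ 2 + 2 * z ^+ 2 * p * q).
have EPhi : Phi3 k = 3 * (1 + z * w) + z ^+ 6 * q ^+ 2.
  rewrite /Phi3 mulnC exprM (_ : 'X ^+ _ = 1 + 3 * z * p + z ^+ 3 * q).
    by rewrite /w; ring.
  by rewrite -(subrK 1 ('X ^+ _)) E; ring.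
pose t := - (z * w); pose s := 1 + t + t ^+ 2 + t ^+ 3 + t ^+ 4 + t ^+ 5.
by exists s, (3 * w ^+ 6 - q ^+ 2 * s); rewrite EPhi /s /t; ring.
Qed.

Lemma dvdz3_cubic_norm (a b c : int) :
  (3 %| cubic_norm 1 a b c)%Z = (3 %| a + b + c)%Z.
Proof.
set s := a + b + c.
have -> : cubic_norm 1 a b c = s ^+ 3 - 3 * (a ^+ 2 * b + a ^+ 2 * c + a * b ^+ 2 +
    b ^+ 2 * c + a * c ^+ 2 + b * c ^+ 2 + 3 * a * b * c).
  by rewrite /cubic_norm /s; ring.
rewrite rpredBr; last exact: dvdz_mulr (dvdzz 3).
by rewrite !dvdzE abszX Euclid_dvdX ?andbT.
Qed.

Definition norm_congr_Phi3 e k := forall a b c : {poly int}, exists w q : {poly int},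
  norm_Xsub1 e 'X a b c =
  1 + ('X - 1) ^+ e * (cubic_norm 1 a b c + ('X - 1) * w) + Phi3 k * q.

Lemma norm_congr_Phi3_5 k : (2 <= k)%N -> norm_congr_Phi3 5 k.
Proof. by move=> /three_ideal_Phi3[u [v E]] a b c; apply: norm_Xsub1_5_congr E. Qed.

Lemma norm_congr_Phi3_7 k : (2 <= k)%N -> norm_congr_Phi3 7 k.
Proof. by move=> /three_ideal_Phi3[u [v E]] a b c; apply: norm_Xsub1_7_congr E. Qed.

Lemma Nk_step e k (h : {poly int}) : (0 < k)%N -> norm_congr_Phi3 e k ->
  exists h' : {poly int},
    Nk k.+1 (1 + ('X - 1) ^+ e * h) = Nk k (1 + ('X - 1) ^+ e * h') /\
    (3 %| h'.[1])%Z = (3 %| h.[1])%Z.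
Proof.
move=> k_gt0 congr; have [h0 [h1 [h2 [-> Eh1]]]] := Nk_norm_Xsub1 e h k_gt0.
have [w [q ->]] := congr h0 h1 h2.
exists (cubic_norm 1 h0 h1 h2 + ('X - 1) * w); split; first exact: Nk_modPhi3.
by rewrite Eh1 -dvdz3_cubic_norm /cubic_norm !hornerE.
Qed.

Lemma Nk_descent_chain e (h : {poly int}) i j :
  (forall k, (2 <= k)%N -> norm_congr_Phi3 e k) -> (2 <= j <= i)%N ->
  exists hj : {poly int},
    Nk i (1 + ('X - 1) ^+ e * h) = Nk j (1 + ('X - 1) ^+ e * hj) /\
    (3 %| hj.[1])%Z = (3 %| h.[1])%Z.
Proof.
move=> congr /andP[j_ge2 j_le_i]; rewrite -(subnK j_le_i).
elim: (i - j)%N h => [|d IH] h; first by exists h.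
have k_ge2 : (2 <= d + j)%N by rewrite (leq_trans j_ge2) ?leq_addl.
have [h' [E' dvd_h']] := Nk_step h (ltnW k_ge2) (congr _ k_ge2).
have [hj [E dvd_hj]] := IH h'.
by exists hj; rewrite addSn E' E dvd_hj dvd_h'.
Qed.

(* [Q0], [Q2], [Q5] are computer-algebra certificates as above; the other
   witnesses come from [3 = - y^2 (y - 1)^2] and [(y - 1)^4 = 9 y^2] modulo
   [1 + y + y^2]. *)
Lemma norm_Xsub1_5_mod_Phi3_1 (R : comPzRingType) (y a b c : R) : exists w q : R,
  (1 - y) * norm_Xsub1 5 y a b c =
  1 - y + 9 * (y ^+ 4 * (a + b + c) + (y - 1) * w) + (1 + y + y ^+ 2) * q.
Proof.
have [Q0 [Q2 [Q5 E]]] : exists Q0 Q2 Q5 : R, norm_Xsub1 5 y a b c =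
    1 + 3 * (y - 1) * (a + b + c) + 9 * Q0 + 3 * (y - 1) ^+ 2 * Q2 + (y - 1) ^+ 5 * Q5.
  move: (y - 1) (subrK 1 y) => z <-.
  exists
    (27 * c ^+ 2 - 3 * b - 27 * b * c + 27 * b ^+ 2 + 3 * a - 27 * a * c - 27 * a * b
     + 27 * a ^+ 2 - 2 * z * c + 81 * z * c ^+ 2 - 3 * z * b - 72 * z * b * c
     + 63 * z * b ^+ 2 + 3 * z * a - 63 * z * a * c - 54 * z * a * b + 45 * z * a ^+ 2);
  exists
    (- 5 * c + 258 * c ^+ 2 + b - 195 * b * c + 141 * b ^+ 2 - 141 * a * c - 96 * a * b
     + 60 * a ^+ 2 + 111 * z * c ^+ 2 - 65 * z * b * c + 34 * z * b ^+ 2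
     - 34 * z * a * c - 15 * z * a * b + 5 * z * a ^+ 2 + 15 * z ^+ 2 * c ^+ 2
     - 5 * z ^+ 2 * b * c + z ^+ 2 * b ^+ 2 - z ^+ 2 * a * c);
  exists
    (c ^+ 3 + b ^+ 3 - 3 * a * b * c + a ^+ 3 + 2 * z * c ^+ 3 + z * b ^+ 3
     - 3 * z * a * b * c + z ^+ 2 * c ^+ 3).
  by rewrite /norm_Xsub1 /cubic_norm /mul_Xsub1 /=; ring.
pose v := y ^+ 2 * (a + b + c) + (y - 1) * (y ^+ 2 * Q2 - y ^+ 4 * Q0 - (y - 1) * Q5).
pose q3 := y ^+ 2 - 3 * y + 3.
exists (y ^+ 2 * (y ^+ 2 * Q2 - y ^+ 4 * Q0 - (y - 1) * Q5)).
exists (- q3 * (y - 1) ^+ 2 * (a + b + c) - q3 * (y - 1) ^+ 3 * Q2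
  - (y - 1) * Q0 * ((1 + y + y ^+ 2) * q3 ^+ 2 - 2 * q3 * y ^+ 2 * (y - 1) ^+ 2)
  + (y ^+ 2 - 5 * y + 1) * v).
by rewrite E /v /q3; ring.
Qed.

Lemma Phi3_1 : Phi3 1 = 1 + 'X + 'X ^+ 2.
Proof. by rewrite /Phi3 /= expn0 muln1 expr1. Qed.

Lemma mod_Phi3_1 (p : {poly int}) : exists (s0 s1 : int) (q : {poly int}),
  p = s0%:P + s1%:P * 'X + Phi3 1 * q.
Proof.
elim/poly_ind: p => [|p c [s0 [s1 [q ->]]]].
  by exists 0, 0, 0; rewrite !(polyC0, mul0r, mulr0, addr0).
exists (c - s1), (s0 - s1), (q * 'X + s1%:P).
by rewrite Phi3_1 !rmorphB /=; ring.
Qed.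

Lemma Nk1_1subX : Nk 1 (1 - 'X) = 3.
Proof.
have w_prim := omega_prim (ltn0Sn 0); set w := omega 1 in w_prim *.
have w3 : w ^+ 3 = 1 := prim_expr_order w_prim.
have w2 : w ^+ 2 = - 1 - w.
  by rewrite -[LHS]subr0 -(prim_root3_sum w_prim); ring.
rewrite /Nk expn1 unlock /= !rmorphB /= rmorph1 map_polyX !hornerE -/w.
change ((1 - w ^+ 1) * (1 - w ^+ 2) * 1 = 3).
by ring: w2 w3.
Qed.

Lemma Nk2_to_Nk1 (h : {poly int}) : exists A B : int,
  3 * Nk 2 (1 + ('X - 1) ^+ 5 * h) = Nk 1 (1 - 'X + 9%:P * (A%:P + B%:P * (1 - 'X))) /\
  (3 %| A)%Z = (3 %| h.[1])%Z.
Proof.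
have [h0 [h1 [h2 [-> Eh1]]]] := Nk_norm_Xsub1 5 h (ltn0Sn 0).
have [w [q E]] := norm_Xsub1_5_mod_Phi3_1 ('X : {poly int}) h0 h1 h2.
move: E; set W := 'X ^+ 4 * _ + _ => E.
have [s0 [s1 [q' EW]]] := mod_Phi3_1 W.
exists (s0 + s1), (- s1); split.
  rewrite -Nk1_1subX -NkM E EW -Phi3_1 -[RHS](Nk_modPhi3 _ (9 * q' + q)) //.
  by congr Nk; rewrite polyC_natr rmorphD rmorphN /=; ring.
have W1 : W.[1] = s0 + s1 + 3 * q'.[1].
  by rewrite EW Phi3_1 !hornerE; ring.
have -> : h.[1] = W.[1] by rewrite Eh1 /W !hornerE; ring.
by rewrite W1 (rpredDr _ (dvdz_mulr _ (dvdzz 3))).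
Qed.


Theorem lemma4p4 (m : int) (i : nat) (hi : (2 <= i)%N) :
  (forall h : {poly int},
     m%:~R = Nk i (1 + ('X - 1) ^+ 5 * h) ->
     (forall j : nat, (2 <= j <= i)%N ->
        exists hj : {poly int},
          m%:~R = Nk j (1 + ('X - 1) ^+ 5 * hj) /\
          ((3 %| hj.[1])%Z = (3 %| h.[1])%Z)) /\
     (exists A B : int,
        (3 * m)%:~R = Nk 1 (1 - 'X + 9%:P * (A%:P + B%:P * (1 - 'X))) /\
        (~~ (3 %| h.[1])%Z -> ~~ (3 %| A)%Z) /\
        ((3 %| h.[1])%Z -> (3 %| A)%Z)))
  /\
  (forall t : {poly int},
     m%:~R = Nk i (1 + ('X - 1) ^+ 7 * t) ->
     forall j : nat, (2 <= j <= i)%N ->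
        exists tj : {poly int},
          m%:~R = Nk j (1 + ('X - 1) ^+ 7 * tj) /\
          ((3 %| tj.[1])%Z = (3 %| t.[1])%Z)).
Proof.
split=> [h Hm | t Ht j ij]; last first.
  have [tj [E dvd_tj]] := Nk_descent_chain t norm_congr_Phi3_7 ij.
  by exists tj; rewrite Ht E.
split=> [j ij | ].
  have [hj [E dvd_hj]] := Nk_descent_chain h norm_congr_Phi3_5 ij.
  by exists hj; rewrite Hm E.
have i2 : (2 <= 2 <= i)%N by rewrite leqnn hi.
have [h2 [E2 dvd_h2]] := Nk_descent_chain h norm_congr_Phi3_5 i2.
have [A [B [EA dvd_A]]] := Nk2_to_Nk1 h2.
exists A, B; rewrite intrM Hm E2 EA dvd_A dvd_h2.
by split=> //; split=> // /negP.
Qed.
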